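(* Let $f$ be a real function differentiable on the interval $a\le x\le b$, and let $m,k\in\mathbb{R}$. Then the area of the surface of revolution in $\mathbb{R}^3$ obtained by revolving the graph of $y=f(x)$, $a\le x\le b$, about the line $y=m\,x+k$ is given by $$2\pi\int_a^b \bigl|f(x)-m\,x-k\bigr|\,\sqrt{\frac{1+\bigl[f'(x)\bigr]^2}{1+m^2}}\,dx.$$
   Context: The plane $\mathbb{R}^2$ is regarded as sitting inside $\mathbb{R}^3$, and the surface of revolution is the surface swept out when the graph is rotated through a full turn about the given line (viewed as an axis in $\mathbb{R}^3$). *)

From Stdlib Require Import Reals.
From Coquelicot Require Import Coquelicot.
Open Scope R_scope.

Definition v3 : Type := (R * R * R)%type.
Definition mk3 (x y z : R) : v3 := (x, y, z).
Definition v_x (v : v3) : R := fst (fst v).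
Definition v_y (v : v3) : R := snd (fst v).
Definition v_z (v : v3) : R := snd v.

Definition vadd (p q : v3) : v3 := mk3 (v_x p + v_x q) (v_y p + v_y q) (v_z p + v_z q).
Definition vsub (p q : v3) : v3 := mk3 (v_x p - v_x q) (v_y p - v_y q) (v_z p - v_z q).
Definition vscale (c : R) (p : v3) : v3 := mk3 (c * v_x p) (c * v_y p) (c * v_z p).
Definition vdot (p q : v3) : R := v_x p * v_x q + v_y p * v_y q + v_z p * v_z q.
Definition vcross (p q : v3) : v3 :=
  mk3 (v_y p * v_z q - v_z p * v_y q)
      (v_z p * v_x q - v_x p * v_z q)
      (v_x p * v_y q - v_y p * v_x q).
Definition vnorm (p : v3) : R := sqrt (vdot p p).

(* Rotation of the point p by angle t about the axis through c with unit
   direction u (Rodrigues' formula). *)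
Definition rotate_about (c u : v3) (t : R) (p : v3) : v3 :=
  let q := vsub p c in
  vadd c (vadd (vscale (cos t) q)
               (vadd (vscale (sin t) (vcross u q))
                     (vscale ((1 - cos t) * vdot u q) u))).

(* The line y = m x + k of the plane R^2 = {z = 0} in R^3, as an axis:
   base point (0,k,0), unit direction (1,m,0)/sqrt(1+m^2). *)
Definition line_point (m k : R) : v3 := mk3 0 k 0.
Definition line_dir (m k : R) : v3 := vscale (/ sqrt (1 + m ^ 2)) (mk3 1 m 0).

Definition revolution_surface (f : R -> R) (m k : R) (x t : R) : v3 :=
  rotate_about (line_point m k) (line_dir m k) t (mk3 x (f x) 0).

Definition derive3 (g : R -> v3) (s : R) : v3 :=
  mk3 (Derive (fun r => v_x (g r)) s)
      (Derive (fun r => v_y (g r)) s)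
      (Derive (fun r => v_z (g r)) s).

Definition param_surface_area (S : R -> R -> v3) (a b al be : R) : R :=
  RInt (fun x => RInt (fun t =>
          vnorm (vcross (derive3 (fun s => S s t) x) (derive3 (fun r => S x r) t)))
        al be) a b.

Definition differentiable_on_closed (f : R -> R) (a b : R) : Prop :=
  forall x, a <= x <= b ->
    exists l : R,
      filterlim (fun h => (f (x + h) - f x) / h)
        (within (fun h => h <> 0 /\ a <= x + h <= b) (locally 0))
        (locally l).

From Stdlib Require Import Reals Lra Classical.
From Coquelicot Require Import Coquelicot.
Open Scope R_scope.

(* Let [u] be the unit direction of the axis and [u^perp] its normal in the plane. A point of
   the graph sits at [a u + d u^perp] from the axis, with [d = (f x - m x - k) / sqrt (1 + m^2)]
   its signed distance to it, and Rodrigues' formula rotates it to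
   [a u + d (cos t u^perp + sin t e_z)]. In the orthonormal frame [(u, u^perp, e_z)] the
   [x]-tangent is thus the rotated [(1, f' x, 0)] and the [t]-tangent is [d] times a unit
   vector orthogonal to it, so the area element is [|d| sqrt (1 + f' x ^ 2)] for every [t], and
   integrating over [t] in [[0, 2 pi]] gives the factor [2 pi]. Only interior points matter for
   the outer integral. *)

Lemma eq_modulo_relation (e r x y : R) : e = 1 -> x - y = r * (e - 1) -> x = y.
Proof. intros -> H. rewrite Rminus_diag, Rmult_0_r in H. lra. Qed.

Lemma eq_modulo_relations (e1 e2 r1 r2 x y : R) :
  e1 = 1 -> e2 = 1 -> x - y = r1 * (e1 - 1) + r2 * (e2 - 1) -> x = y.
Proof. intros -> -> H. rewrite Rminus_diag, !Rmult_0_r, Rplus_0_r in H. lra. Qed.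

Lemma mk3_eq (x y z x' y' z' : R) : x = x' -> y = y' -> z = z' -> mk3 x y z = mk3 x' y' z'.
Proof. intros -> -> ->. reflexivity. Qed.

Lemma rotate_about_planar (c1 c2 p q x y t : R) : p ^ 2 + q ^ 2 = 1 ->
  let a := p * (x - c1) + q * (y - c2) in
  let d := p * (y - c2) - q * (x - c1) in
  rotate_about (mk3 c1 c2 0) (mk3 p q 0) t (mk3 x y 0) =
  mk3 (c1 + a * p - cos t * d * q) (c2 + a * q + cos t * d * p) (sin t * d).
Proof.
  intros Hu a d.
  unfold rotate_about, vadd, vsub, vscale, vdot, vcross, v_x, v_y, v_z, mk3; cbn [fst snd].
  apply mk3_eq; subst a d.
  - apply (eq_modulo_relation _ (- cos t * (x - c1)) _ _ Hu). ring.
  - apply (eq_modulo_relation _ (- cos t * (y - c2)) _ _ Hu). ring.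
  - ring.
Qed.

(* The cross product of [a u + b (c u^perp + s e_z)] and [d (- s u^perp + c e_z)],
   where [u = (p, q, 0)] and [u^perp = (-q, p, 0)]. *)
Lemma vnorm_vcross_rotating_frame (p q c s a b d : R) :
  p ^ 2 + q ^ 2 = 1 -> c ^ 2 + s ^ 2 = 1 ->
  vnorm (vcross (mk3 (a * p - c * b * q) (a * q + c * b * p) (s * b))
                (mk3 (s * d * q) (- (s * d * p)) (c * d)))
  = Rabs d * sqrt (a ^ 2 + b ^ 2).
Proof.
  intros Hu Hcs.
  unfold vnorm, vdot, vcross, v_x, v_y, v_z, mk3; cbn [fst snd].
  rewrite <- sqrt_Rsqr_abs, <- sqrt_mult_alt by apply Rle_0_sqr.
  f_equal. unfold Rsqr.
  apply (eq_modulo_relations _ _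
    (a^2 * d^2 * (c^2 + s^2 * (p^2 + q^2 + 1)) + b^2 * d^2 * (c^2 + s^2)^2)
    (a^2 * d^2 + b^2 * d^2 * (c^2 + s^2 + 1)) _ _ Hu Hcs). ring.
Qed.

Section RevolutionSurface.

Variables (f : R -> R) (m k : R).

Let p := / sqrt (1 + m ^ 2).
Let q := m * p.
Let a (s : R) := p * s + q * (f s - k).
Let d (s : R) := p * (f s - k) - q * s.

Lemma line_dir_unit : p ^ 2 + q ^ 2 = 1.
Proof.
  assert (Hm : 0 < 1 + m ^ 2) by nra.
  unfold q, p. rewrite Rpow_mult_distr, pow_inv, <- Rsqr_pow2, Rsqr_sqrt by lra.
  field. lra.
Qed.

Lemma revolution_surface_coords (s t : R) :
  revolution_surface f m k s t =
  mk3 (a s * p - cos t * d s * q) (k + a s * q + cos t * d s * p) (sin t * d s).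
Proof.
  unfold revolution_surface, line_point.
  replace (line_dir m k) with (mk3 p q 0)
    by (unfold line_dir, vscale, v_x, v_y, v_z, mk3, q, p; cbn [fst snd]; f_equal; [f_equal|]; ring).
  rewrite (rotate_about_planar _ _ _ _ _ _ _ line_dir_unit); cbv zeta.
  unfold a, d. apply mk3_eq; ring.
Qed.

Ltac derive_revolution_coordinate :=
  erewrite Derive_ext
    by (intro; rewrite revolution_surface_coords; unfold v_x, v_y, v_z, mk3; cbn [fst snd];
        reflexivity);
  apply is_derive_unique; unfold a, d; auto_derive; auto;
  change (Derive (fun y => f y)) with (Derive f); ring.

Lemma derive3_revolution_surface_x (x t : R) : ex_derive f x ->
  let a' := p + q * Derive f x in
  let d' := p * Derive f x - q in
  derive3 (fun s => revolution_surface f m k s t) x =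
  mk3 (a' * p - cos t * d' * q) (a' * q + cos t * d' * p) (sin t * d').
Proof. intros Hf; cbv zeta. unfold derive3. apply mk3_eq; derive_revolution_coordinate. Qed.

Lemma derive3_revolution_surface_t (x t : R) :
  derive3 (fun r => revolution_surface f m k x r) t =
  mk3 (sin t * d x * q) (- (sin t * d x * p)) (cos t * d x).
Proof. unfold derive3. apply mk3_eq; derive_revolution_coordinate. Qed.

Lemma revolution_surface_area_element (x t : R) : ex_derive f x ->
  vnorm (vcross (derive3 (fun s => revolution_surface f m k s t) x)
                (derive3 (fun r => revolution_surface f m k x r) t))
  = Rabs (f x - m * x - k) * sqrt ((1 + Derive f x ^ 2) / (1 + m ^ 2)).
Proof.
  intros Hf.
  assert (Hm : 0 < 1 + m ^ 2) by nra.
  assert (Hp : 0 < p) by (apply Rinv_0_lt_compat, sqrt_lt_R0; exact Hm).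
  assert (Htrig : cos t ^ 2 + sin t ^ 2 = 1)
    by (rewrite <- (sin2_cos2 t); unfold Rsqr; ring).
  rewrite derive3_revolution_surface_x, derive3_revolution_surface_t by exact Hf; cbv zeta.
  rewrite (vnorm_vcross_rotating_frame _ _ _ _ _ _ _ line_dir_unit Htrig).
  replace (d x) with (p * (f x - m * x - k)) by (unfold d, q; ring).
  replace ((p + q * Derive f x) ^ 2 + (p * Derive f x - q) ^ 2)
    with ((p ^ 2 + q ^ 2) * (1 + Derive f x ^ 2)) by ring.
  rewrite line_dir_unit, Rmult_1_l, sqrt_div_alt, Rabs_mult, (Rabs_pos_eq p) by lra.
  unfold p, Rdiv. ring.
Qed.

End RevolutionSurface.

Lemma differentiable_on_closed_ex_derive (f : R -> R) (a b x : R) :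
  differentiable_on_closed f a b -> a < x < b -> ex_derive f x.
Proof.
  intros Hd Hx. destruct (Hd x) as [l Hl]; [lra|].
  exists l. apply is_derive_Reals. intros eps Heps.
  destruct (Hl _ (locally_ball l (mkposreal eps Heps))) as [del Hdel].
  assert (Hr : 0 < Rmin del (Rmin (x - a) (b - x)))
    by (apply Rmin_pos; [apply cond_pos | apply Rmin_pos; lra]).
  exists (mkposreal _ Hr). intros h Hh0 Hh; simpl in Hh.
  pose proof (Rmin_l del (Rmin (x - a) (b - x))) as Hdel_min.
  pose proof (Rmin_r del (Rmin (x - a) (b - x))) as Hab_min.
  pose proof (Rmin_l (x - a) (b - x)). pose proof (Rmin_r (x - a) (b - x)).
  apply (Hdel h).
  - change (Rabs (h - 0) < del). rewrite Rminus_0_r. lra.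
  - destruct (Rabs_def2 h _ Hh). split; [exact Hh0 | lra].
Qed.

(* Coquelicot's [RInt] of a non-integrable function is the limit of the trivial filter,
   which its completeness construction evaluates to [0]. *)
Lemma RInt_not_ex_RInt (h : R -> R) (a b : R) : ~ ex_RInt h a b -> RInt h a b = 0.
Proof.
  intros Hnot. unfold RInt, iota, lim; simpl. unfold R_complete_lim.
  assert (Hempty : forall P : R -> Prop, forall y, is_RInt h a b y -> P y)
    by (intros P y Hy; exfalso; apply Hnot; exists y; exact Hy).
  rewrite (is_lub_Rbar_unique _ p_infty); [reflexivity | split].
  - intros x _. exact I.
  - intros [r | |] Hub; simpl; auto.
    + assert (r + 1 <= r) by (apply (Hub (r + 1)), Hempty). lra.
    + apply (Hub 0), Hempty.
Qed.

Lemma RInt_scal_R (h : R -> R) (a b c : R) : RInt (fun x => c * h x) a b = c * RInt h a b.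
Proof.
  destruct (Req_dec c 0) as [-> | Hc].
  { rewrite Rmult_0_l, (RInt_ext _ (fun _ => 0)) by (intros; apply Rmult_0_l).
    rewrite RInt_const. apply Rmult_0_r. }
  destruct (classic (ex_RInt h a b)) as [Hh | Hh].
  - exact (RInt_scal h a b c Hh).
  - rewrite (RInt_not_ex_RInt h), Rmult_0_r by exact Hh.
    apply RInt_not_ex_RInt. intros Hch. apply Hh.
    apply (ex_RInt_ext (fun x => / c * (c * h x))).
    + intros x _. change (/ c * (c * h x) = h x). field. exact Hc.
    + apply (ex_RInt_scal (fun x => c * h x)), Hch.
Qed.

Theorem mainTheorem2 (f : R -> R) (a b m k : R) :
  a <= b ->
  differentiable_on_closed f a b ->
  param_surface_area (revolution_surface f m k) a b 0 (2 * PI) =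
  2 * PI * RInt (fun x => Rabs (f x - m * x - k) *
                          sqrt ((1 + (Derive f x) ^ 2) / (1 + m ^ 2))) a b.
Proof.
  intros Hab Hd. unfold param_surface_area.
  rewrite <- RInt_scal_R. apply RInt_ext. intros x Hx.
  rewrite Rmin_left, Rmax_right in Hx by exact Hab.
  pose proof (differentiable_on_closed_ex_derive f a b x Hd Hx) as Hf.
  erewrite RInt_ext by (intros t _; apply revolution_surface_area_element, Hf).
  rewrite RInt_const, Rminus_0_r. reflexivity.
Qed.
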